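(* The minimum number of subgraphs in a $\{K_3,K_4\}$-decomposition of $K_{19}$ is $D(19,\{3,4\})=35$, and a $\{K_3,K_4\}$-decomposition of $K_{19}$ attaining this minimum consists of $13$ copies of $K_3$ and $22$ copies of $K_4$.
   Context: A $\{K_3,K_4\}$-decomposition of the complete graph $K_v$ is a collection of subgraphs of $K_v$, each isomorphic to $K_3$ or $K_4$, such that every edge of $K_v$ lies in exactly one of them. $D(v,\{3,4\})$ denotes the minimum number of subgraphs in a $\{K_3,K_4\}$-decomposition of $K_v$. *)

From mathcomp Require Import all_boot.
Set Implicit Arguments. Unset Strict Implicit. Unset Printing Implicit Defensive.

(* A copy of K_3 / K_4 inside K_v is the complete
   subgraph on a 3- / 4-element vertex set, so it is determined by that set. *)
Definition K34_decomposition (v : nat) (B : seq {set 'I_v}) : Prop :=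
  (forall b, b \in B -> (#|b| == 3) || (#|b| == 4)) /\
  (forall x y : 'I_v, x != y -> count (fun b : {set 'I_v} => (x \in b) && (y \in b)) B = 1).

Definition num_K3 (v : nat) (B : seq {set 'I_v}) : nat :=
  count (fun b : {set 'I_v} => #|b| == 3) B.
Definition num_K4 (v : nat) (B : seq {set 'I_v}) : nat :=
  count (fun b : {set 'I_v} => #|b| == 4) B.

Definition D34_is (v n : nat) : Prop :=
  (exists B : seq {set 'I_v}, K34_decomposition B /\ size B = n) /\
  (forall B : seq {set 'I_v}, K34_decomposition B -> n <= size B).

From mathcomp Require Import all_boot zify.
Set Implicit Arguments. Unset Strict Implicit. Unset Printing Implicit Defensive.

(* Every vertex x lies in t(x) triangles and k(x) copies of K4 with 3 k(x) + 2 t(x) = 18, and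
   double counting edges gives 2 n4 + n3 = 57 for the numbers n3, n4 of triangles and K4s.  A
   decomposition thus has (57 + n3) / 2 blocks, and everything hinges on n3 >= 13.
   Let Q be the set of vertices lying in no triangle.  Off Q we have t >= 3, and the t(x) add up
   to 3 n3, so it suffices to show |Q| < 8.  If |Q| >= 8, a vertex y outside Q sees Q only
   through its k(y) copies of K4, at most three Q-vertices in each; this forces t(y) = 3,
   k(y) = 4, |Q| <= 12 and n3 = 19 - |Q|.  Counting the incidences and the pairs inside Q in
   terms of the numbers n_j of blocks meeting Q in j vertices then leaves only |Q| = 8 with
   n1 = 0 < n4, or with n1 = 1, n3 = 3, n4 = 0.  The first case fails at a vertex of a K4 inside
   Q, the second at the vertices of the unique block meeting Q exactly once. *)

Lemma count_and_sum (I : Type) (r : seq I) (P Q : pred I) :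
  count (fun i => P i && Q i) r = \sum_(i <- r | P i) (Q i : nat).
Proof. by rewrite -sum1_count big_mkcondr; apply: eq_bigr => i _; case: (Q i). Qed.

Lemma count_andC (I : Type) (r : seq I) (P Q : pred I) :
  count (fun i => P i && Q i) r + count (fun i => P i && ~~ Q i) r = count P r.
Proof. by elim: r => //= i r <-; case: (P i); case: (Q i); rewrite /=; lia. Qed.

Section Blocks.
Variables (T : finType) (B : seq {set T}).

Lemma sum_card_cap (Y : {set T}) (F : {set T} -> nat) :
  \sum_(y in Y) \sum_(b <- B | y \in b) F b = \sum_(b <- B) #|b :&: Y| * F b.
Proof.
under eq_bigr => y _ do rewrite big_mkcond.
rewrite exchange_big; apply: eq_bigr => b _ /=.
rewrite -sum1_card big_distrl /= big_mkcond [RHS]big_mkcond.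
by apply: eq_bigr => y _; rewrite inE; case: (y \in b); case: (y \in Y); rewrite ?mul1n.
Qed.

Lemma card_le_count_blocks (P : pred {set T}) (W : {set T}) :
  (forall b, b \in B -> P b -> #|b :&: W| <= 1) ->
  (forall w, w \in W -> 0 < count (fun b : {set T} => (w \in b) && P b) B) ->
  #|W| <= count P B.
Proof.
move=> meet1 cover; rewrite -sum1_card.
apply: (@leq_trans (\sum_(w in W) \sum_(b <- B | w \in b) (P b : nat))).
  by apply: leq_sum => w /cover; rewrite count_and_sum.
rewrite sum_card_cap -sum1_count [X in _ <= X]big_mkcond /= big_seq [X in _ <= X]big_seq.
by apply: leq_sum => b bB; case Pb: (P b); rewrite ?muln0 ?muln1 ?meet1.
Qed.

Hypothesis pair_once : forall x y : T, x != y ->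
  count (fun b : {set T} => (x \in b) && (y \in b)) B = 1.

Lemma sum_card_cap_at x (Y : {set T}) : x \notin Y ->
  \sum_(b <- B | x \in b) #|b :&: Y| = #|Y|.
Proof.
move=> xY; rewrite -sum1_card big_mkcond.
transitivity (\sum_(b <- B) #|b :&: Y| * (x \in b)).
  by apply: eq_bigr => b _; case: (x \in b); rewrite ?muln1 ?muln0.
rewrite -sum_card_cap; apply: eq_bigr => y yY.
by rewrite -count_and_sum pair_once //; apply: contraNneq xY => <-.
Qed.

Lemma pair_block_unique b b' x y :
  b \in B -> b' \in B -> x \in b -> y \in b -> x \in b' -> y \in b' -> x != y -> b' = b.
Proof.
move=> bB b'B xb yb xb' yb' /pair_once one; apply/eqP/negPn/negP => neq.
have sub : {subset [:: b; b'] <= [seq c : {set T} <- B | (x \in c) && (y \in c)]}.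
  by move=> c; rewrite !inE mem_filter => /orP[]/eqP->; rewrite ?xb ?yb ?xb' ?yb'.
by have := uniq_leq_size _ sub; rewrite size_filter one /= inE eq_sym neq => /(_ isT).
Qed.

Hypothesis block_size : forall b, b \in B -> (#|b| == 3) || (#|b| == 4).

Local Notation nK3 := (count (fun b : {set T} => #|b| == 3) B).
Local Notation nK4 := (count (fun b : {set T} => #|b| == 4) B).

Definition triangles_at x := count (fun b : {set T} => (x \in b) && (#|b| == 3)) B.
Definition K4s_at x := count (fun b : {set T} => (x \in b) && (#|b| == 4)) B.

Lemma count_blocks_at x :
  count (fun b : {set T} => x \in b) B = triangles_at x + K4s_at x.
Proof.
rewrite /triangles_at /K4s_at -(count_andC B _ (fun b : {set T} => #|b| == 3)).
congr (_ + _); apply: eq_in_count => b /block_size.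
by case: (x \in b) => //=; case/orP=> /eqP->.
Qed.

Lemma size_blocks : size B = nK3 + nK4.
Proof.
rewrite -(count_predC (fun b : {set T} => #|b| == 3)); congr (_ + _).
by apply: eq_in_count => b /block_size /=; case/orP=> /eqP->.
Qed.

Lemma degree x : 3 * K4s_at x + 2 * triangles_at x = #|T| - 1.
Proof.
rewrite subn1 -(cardsC1 x) -(@sum_card_cap_at x [set~ x]) ?setC11 //.
rewrite /K4s_at /triangles_at !count_and_sum !big_distrr -big_split /=.
rewrite big_seq_cond [RHS]big_seq_cond; apply: eq_bigr => b /andP[/block_size sb xb].
by move: sb; rewrite -setDE (cardsD1 x b) xb add1n; case/orP=> /eqP[->].
Qed.

Lemma sum_count_at (P : pred {set T}) :
  \sum_x count (fun b : {set T} => (x \in b) && P b) B = \sum_(b <- B | P b) #|b|.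
Proof.
transitivity (\sum_(x in [set: T]) \sum_(b <- B | x \in b) (P b : nat)).
  by apply: eq_big => [x|x _]; rewrite ?inE // count_and_sum.
rewrite sum_card_cap [RHS]big_mkcond; apply: eq_bigr => b _.
by rewrite setIT; case: (P b); rewrite ?muln1 ?muln0.
Qed.

Lemma sum_triangles_at : \sum_x triangles_at x = 3 * nK3.
Proof.
rewrite sum_count_at (eq_bigr (fun _ => 3 * 1)) => [|b /eqP //].
by rewrite -big_distrr sum1_count.
Qed.

Lemma sum_K4s_at : \sum_x K4s_at x = 4 * nK4.
Proof.
rewrite sum_count_at (eq_bigr (fun _ => 4 * 1)) => [|b /eqP //].
by rewrite -big_distrr sum1_count.
Qed.

Lemma edge_count : 12 * nK4 + 6 * nK3 = #|T| * (#|T| - 1).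
Proof.
transitivity (\sum_x (3 * K4s_at x + 2 * triangles_at x)).
  by rewrite big_split -!big_distrr /= sum_K4s_at sum_triangles_at; lia.
by rewrite (eq_bigr _ (fun x _ => degree x)) sum_nat_const.
Qed.

Definition K4_vertices : {set T} := [set x | triangles_at x == 0].
Local Notation Q := K4_vertices.

Lemma triangle_cap_K4_vertices b : b \in B -> #|b| = 3 -> #|b :&: Q| = 0.
Proof.
move=> bB b3; apply/eqP; rewrite cards_eq0; apply/eqP/setP => x.
rewrite !inE; case xb: (x \in b) => //=; apply/negbTE; rewrite -lt0n -has_count.
by apply/hasP; exists b; rewrite // xb b3.
Qed.

Definition profile (P : pred {set T}) j :=
  count (fun b : {set T} => P b && (#|b :&: Q| == j)) B.

Lemma sum_profile (P : pred {set T}) (F : nat -> nat) :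
  \sum_(b <- B | P b) F #|b :&: Q| =
  F 0 * profile P 0 + F 1 * profile P 1 + F 2 * profile P 2 +
  F 3 * profile P 3 + F 4 * profile P 4.
Proof.
transitivity (\sum_(b <- B | P b) \sum_(j < 5) F j * (#|b :&: Q| == j)).
  rewrite big_seq_cond [RHS]big_seq_cond; apply: eq_bigr => b /andP[bB _].
  have : #|b :&: Q| < 5.
    by have := subset_leq_card (subsetIl b Q); case/orP: (block_size bB) => /eqP->; lia.
  move: #|b :&: Q| => n; rewrite !big_ord_recr big_ord0 /=.
  by case: n => [|[|[|[|[|n]]]]] //= _; lia.
rewrite exchange_big /= !big_ord_recr big_ord0 /= add0n.
by rewrite /profile !count_and_sum -!big_distrr.
Qed.

Lemma sum_card_cap_at_K4_vertex x : x \in Q ->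
  \sum_(b <- B | x \in b) #|b :&: Q| = #|Q| - 1 + K4s_at x.
Proof.
move=> xQ; have t0 : triangles_at x = 0 by move: xQ; rewrite inE => /eqP.
have cardQ : #|Q| = #|Q :\ x|.+1 by rewrite (cardsD1 x Q) xQ.
have := count_blocks_at x; rewrite -sum1_count.
have := @sum_card_cap_at x (Q :\ x) ltac:(by rewrite setD11).
have -> : \sum_(b <- B | x \in b) #|b :&: Q| =
    \sum_(b <- B | x \in b) #|b :&: (Q :\ x)| + \sum_(b <- B | x \in b) 1.
  rewrite -big_split; apply: eq_bigr => b xb /=.
  by rewrite setIDA [#|b :&: Q|](cardsD1 x) inE xb xQ addnC.
lia.
Qed.

Lemma profile_at_K4_vertex x : x \in Q ->
  let p := profile (fun b => x \in b) in
  [/\ p 0 = 0, p 1 + p 2 + p 3 + p 4 = K4s_at x &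
      p 1 + 2 * p 2 + 3 * p 3 + 4 * p 4 = #|Q| - 1 + K4s_at x].
Proof.
move=> xQ p; have t0 : triangles_at x = 0 by move: xQ; rewrite inE => /eqP.
have p0 : p 0 = 0.
  apply/eqP; rewrite eqn0Ngt -has_count; apply/hasPn => b _ /=.
  case xb: (x \in b) => //=; rewrite -lt0n card_gt0.
  by apply/set0Pn; exists x; rewrite inE xb xQ.
have := sum_profile (fun b => x \in b) (fun _ => 1).
rewrite sum1_count count_blocks_at t0.
have := sum_profile (fun b => x \in b) id.
rewrite sum_card_cap_at_K4_vertex //= -/p => ? ?; split; lia.
Qed.

Lemma profile_at_other_vertex y : y \notin Q ->
  let p := profile (fun b => y \in b) in
  [/\ p 4 = 0, p 1 + 2 * p 2 + 3 * p 3 = #|Q| & p 1 + p 2 + p 3 <= K4s_at y].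
Proof.
move=> yQ p.
have cap_lt b : b \in B -> y \in b -> #|b :&: Q| < #|b|.
  move=> bB yb; rewrite -(cardsID Q b) -addn1 leq_add2l card_gt0.
  by apply/set0Pn; exists y; rewrite inE yb yQ.
have p4 : p 4 = 0.
  apply/eqP; rewrite eqn0Ngt -has_count; apply/hasPn => b bB /=.
  case yb: (y \in b) => //=; apply/negP => /eqP cap4.
  by have := cap_lt b bB yb; case/orP: (block_size bB) => /eqP->; rewrite cap4.
have := sum_profile (fun b => y \in b) id.
rewrite sum_card_cap_at // => sum_cap.
have := sum_profile (fun b => y \in b) (fun j => 0 < j).
have : \sum_(b <- B | y \in b) (0 < #|b :&: Q|) <= K4s_at y.
  rewrite /K4s_at count_and_sum big_seq_cond [X in _ <= X]big_seq_cond.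
  apply: leq_sum => b /andP[bB _].
  case/orP: (block_size bB) => /eqP b_card; rewrite b_card /=; last exact: leq_b1.
  by rewrite triangle_cap_K4_vertices.
rewrite -/p /= in sum_cap * => ? ?; split; lia.
Qed.

Lemma count_K3_le_profile0 : nK3 <= profile predT 0.
Proof.
rewrite /profile -!sum1_count /= big_mkcond [X in _ <= X]big_mkcond big_seq [X in _ <= X]big_seq.
by apply: leq_sum => b bB; case: eqP => // /(triangle_cap_K4_vertices bB) ->.
Qed.

Lemma sum_profile_K4_vertices : let n := profile predT in
  n 1 + 2 * n 2 + 3 * n 3 + 4 * n 4 = \sum_(x in Q) K4s_at x /\
  n 1 + 4 * n 2 + 9 * n 3 + 16 * n 4 = \sum_(x in Q) (#|Q| - 1 + K4s_at x).
Proof.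
move=> n; have /= cap := sum_profile predT id.
have /= cap2 := sum_profile predT (fun j => j * j).
rewrite -/n in cap cap2; split.
  rewrite (eq_bigr (fun x => \sum_(b <- B | x \in b) 1)) => [|x xQ].
    by rewrite sum_card_cap (eq_bigr _ (fun b _ => muln1 _)) cap; lia.
  by move: xQ; rewrite sum1_count count_blocks_at inE => /eqP->.
rewrite -(eq_bigr _ (fun x xQ => sum_card_cap_at_K4_vertex xQ)) sum_card_cap cap2; lia.
Qed.

Lemma profile_gt0 (P : pred {set T}) b : b \in B -> P b -> 0 < profile P #|b :&: Q|.
Proof. by move=> bB Pb; rewrite -has_count; apply/hasP; exists b => //; rewrite Pb eqxx. Qed.

Lemma profile_le (P : pred {set T}) j : profile P j <= profile predT j.
Proof. by apply: sub_count => b /andP[_ ->]. Qed.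

Lemma card_K4_vertices_le y : y \notin Q -> #|Q| <= 3 * K4s_at y.
Proof. by case/profile_at_other_vertex => _ <-; lia. Qed.

Lemma sum_triangles_at_other : \sum_(x in ~: Q) triangles_at x = 3 * nK3.
Proof.
rewrite -sum_triangles_at [RHS](bigID (mem Q)) /= [X in _ = X + _]big1 => [|x].
  by rewrite add0n; apply: eq_bigl => x; rewrite inE.
by rewrite inE => /eqP.
Qed.

End Blocks.

Lemma K4_vertex_count_cases s n1 n2 n3 n4 k4 :
  8 <= s <= 12 -> 2 * k4 = 38 + s -> n1 + n2 + n3 + n4 <= k4 ->
  n1 + 2 * n2 + 3 * n3 + 4 * n4 = 6 * s ->
  n1 + 4 * n2 + 9 * n3 + 16 * n4 = s * (s + 5) ->
  s = 8 /\ (n1 = 0 /\ 0 < n4 \/ n1 = 1 /\ n3 = 3 /\ n4 = 0).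
Proof.
move=> s_range; have : s = 8 \/ s = 10 \/ s = 12 \/ s = 9 \/ s = 11 by lia.
by case=> [|[|[|[|]]]] ->; lia.
Qed.

Section K19.
Variables (T : finType) (B : seq {set T}).
Hypothesis pair_once : forall x y : T, x != y ->
  count (fun b : {set T} => (x \in b) && (y \in b)) B = 1.
Hypothesis block_size : forall b, b \in B -> (#|b| == 3) || (#|b| == 4).
Hypothesis card_T : #|T| = 19.

Local Notation nK3 := (count (fun b : {set T} => #|b| == 3) B).
Local Notation nK4 := (count (fun b : {set T} => #|b| == 4) B).
Local Notation Q := (K4_vertices B).
Local Notation n := (profile B predT).

Lemma degree_K19 x : 3 * K4s_at B x + 2 * triangles_at B x = 18.
Proof. by rewrite degree // card_T. Qed.

Lemma edge_count_K19 : 2 * nK4 + nK3 = 57.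
Proof. by have := edge_count pair_once block_size; rewrite card_T; lia. Qed.

Lemma K4s_at_K4_vertex x : x \in Q -> K4s_at B x = 6.
Proof. by have := degree_K19 x; rewrite inE => + /eqP t0; rewrite t0; lia. Qed.

Lemma triangles_at_other_vertex y : y \notin Q -> 3 <= triangles_at B y.
Proof. by have := degree_K19 y; rewrite inE -lt0n; lia. Qed.

Lemma card_other_vertices_le : #|~: Q| <= nK3.
Proof.
rewrite -(leq_pmul2l (isT : 0 < 3)) -sum_triangles_at_other // mulnC -sum_nat_const.
by apply: leq_sum => y; rewrite inE; exact: triangles_at_other_vertex.
Qed.

Lemma card_K4_vertices_ge9 : n 1 = 0 -> 0 < n 4 -> 9 <= #|Q|.
Proof.
move=> n1; rewrite -has_count => /hasP[b bB /andP[_ /eqP b4]].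
have [x] : exists x, x \in b :&: Q by apply/card_gt0P; rewrite b4.
rewrite inE => /andP[xb xQ].
have := profile_gt0 (P := fun b => x \in b) bB xb; rewrite b4.
have := profile_le B (fun b => x \in b) 1.
by case: (profile_at_K4_vertex pair_once block_size xQ); rewrite K4s_at_K4_vertex //; lia.
Qed.

Section LargeK4Vertices.
Hypothesis Q_ge8 : 8 <= #|Q|.

Lemma other_vertex_regular y : y \notin Q -> triangles_at B y = 3 /\ K4s_at B y = 4.
Proof.
move=> yQ; have := card_K4_vertices_le pair_once block_size yQ.
by have := triangles_at_other_vertex yQ; have := degree_K19 y; lia.
Qed.

Lemma count_K3_eq_card_other : nK3 = #|~: Q|.
Proof.
apply/eqP; rewrite -(eqn_pmul2l (isT : 0 < 3)) -sum_triangles_at_other //.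
rewrite mulnC -sum_nat_const; apply/eqP/eq_bigr => y.
by rewrite inE => /other_vertex_regular[].
Qed.

Lemma other_vertex_profile3 y : y \notin Q ->
  0 < profile B (fun b => y \in b) 1 -> 0 < profile B (fun b => y \in b) 3.
Proof.
move=> yQ; have [_ k4] := other_vertex_regular yQ.
by case: (profile_at_other_vertex pair_once block_size yQ); rewrite k4; lia.
Qed.

Lemma K4_vertex_profile_cases :
  #|Q| = 8 /\ (n 1 = 0 /\ 0 < n 4 \/ n 1 = 1 /\ n 3 = 3 /\ n 4 = 0).
Proof.
have cardQ := cardsC Q; rewrite card_T in cardQ.
have K3 := count_K3_eq_card_other; have edge := edge_count_K19.
have [y yQ] : exists y, y \in ~: Q by apply/card_gt0P; lia.
rewrite inE in yQ; have [_ k4] := other_vertex_regular yQ.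
have := card_K4_vertices_le pair_once block_size yQ; rewrite k4 => Q12.
have /= := sum_profile block_size predT (fun _ => 1).
rewrite sum1_size size_blocks // => sizeB.
have := count_K3_le_profile0 B.
have [] := sum_profile_K4_vertices pair_once block_size.
have -> : \sum_(x in Q) K4s_at B x = 6 * #|Q|.
  by rewrite mulnC -sum_nat_const; apply: eq_bigr => x /K4s_at_K4_vertex.
have -> : \sum_(x in Q) (#|Q| - 1 + K4s_at B x) = #|Q| * (#|Q| + 5).
  by rewrite -sum_nat_const; apply: eq_bigr => x /K4s_at_K4_vertex ->; lia.
move=> sum1 sum2 n0; apply: (K4_vertex_count_cases (n2 := n 2) (k4 := nK4)); lia.
Qed.

Lemma card_K4_vertices_le_profile3 : n 1 = 1 -> n 4 = 0 -> #|Q| <= n 3 + 3.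
Proof.
move=> n1 n4.
have [b bB /andP[_ /eqP b1]] : exists2 b, b \in B & predT b && (#|b :&: Q| == 1).
  by apply/hasP; rewrite has_count; move: n1; rewrite /profile => ->.
have b4 : #|b| = 4.
  by case/orP: (block_size bB) => /eqP // b3; rewrite triangle_cap_K4_vertices in b1.
have /cards1P[x0 bQ] : #|b :&: Q| == 1 by rewrite b1.
have : x0 \in b :&: Q by rewrite bQ set11.
rewrite inE => /andP[x0b x0Q].
have a3 : profile B (fun b' => x0 \in b') 3 = #|Q| - 6.
  have := profile_gt0 (P := fun b' => x0 \in b') bB x0b; rewrite b1.
  have := profile_le B (fun b' => x0 \in b') 1; have := profile_le B (fun b' => x0 \in b') 4.
  by case: (profile_at_K4_vertex pair_once block_size x0Q); rewrite K4s_at_K4_vertex //; lia.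
(* Each w in W = b \ Q lies in a block meeting Q in three vertices.  Such a block has a single
   vertex outside Q and avoids x0, the pair {x0, w} being covered by b; but x0 itself already
   lies in |Q| - 6 of these blocks. *)
set W := b :\: Q.
have cardW : #|W| = 3 by have := cardsID Q b; rewrite b1 b4 -/W; lia.
have : #|W| <= count (fun b' => (#|b' :&: Q| == 3) && (x0 \notin b')) B.
  apply: card_le_count_blocks => [b' b'B /andP[/eqP b'3 _] | w].
    have : b' :&: W \subset b' :\: Q.
      by apply/subsetP => z; rewrite !inE => /and3P[-> ->].
    move/subset_leq_card; have := cardsID Q b'; rewrite b'3.
    by case/orP: (block_size b'B) => /eqP->; lia.
  rewrite inE => /andP[wQ wb].
  have x0w : x0 != w by apply: contraNneq wQ => <-.
  rewrite -(eq_in_count (a1 := fun b' : {set T} => (w \in b') && (#|b' :&: Q| == 3))) => [|b' b'B].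
    by have := profile_gt0 (P := fun b => w \in b) bB wb; rewrite b1; exact: other_vertex_profile3.
  case wb': (w \in b'); case: eqP => //= b'3; apply/esym/negP => x0b'.
  by move: b'3; rewrite (pair_block_unique pair_once bB b'B x0b wb x0b' wb' x0w) b1.
have := count_andC B (fun b' : {set T} => #|b' :&: Q| == 3) (fun b' : {set T} => x0 \in b').
rewrite (eq_count (a2 := fun b' : {set T} => (x0 \in b') && (#|b' :&: Q| == 3))) => [|b'].
  by rewrite -/(profile B _ 3) a3 /profile /=; lia.
exact: andbC.
Qed.

End LargeK4Vertices.

Lemma card_K4_vertices_lt8 : #|Q| < 8.
Proof.
rewrite ltnNge; apply/negP => Q_ge8.
have [Q8 [[n1 n4] | [n1 [n3 n4]]]] := K4_vertex_profile_cases Q_ge8.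
  by have := card_K4_vertices_ge9 n1 n4; rewrite Q8.
by have := card_K4_vertices_le_profile3 Q_ge8 n1 n4; rewrite Q8 n3.
Qed.

Lemma size_ge35 : 35 <= size B.
Proof.
have := cardsC Q; have := card_K4_vertices_lt8; have := card_other_vertices_le.
by have := edge_count_K19; rewrite size_blocks // card_T; lia.
Qed.

End K19.

Definition K19_blocks : seq (seq nat) :=
  [:: [:: 0; 1; 12; 14]; [:: 0; 2; 5; 6]; [:: 0; 3; 9; 16]; [:: 0; 4; 7; 18];
      [:: 0; 8; 10; 13]; [:: 0; 11; 15; 17]; [:: 1; 2; 10; 17]; [:: 1; 3; 4; 15];
      [:: 1; 5; 13; 18]; [:: 1; 6; 7; 9]; [:: 1; 8; 11; 16]; [:: 2; 4; 9; 11];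
      [:: 9; 13; 14; 15]; [:: 5; 9; 10; 12]; [:: 8; 9; 17; 18]; [:: 5; 7; 15; 16];
      [:: 6; 10; 15; 18]; [:: 2; 8; 12; 15]; [:: 4; 6; 14; 17]; [:: 2; 3; 7; 13];
      [:: 2; 14; 16; 18]; [:: 3; 11; 12; 18];
      [:: 5; 11; 14]; [:: 3; 5; 17]; [:: 4; 5; 8]; [:: 4; 10; 16]; [:: 4; 12; 13];
      [:: 3; 6; 8]; [:: 7; 8; 14]; [:: 3; 10; 14]; [:: 7; 10; 11]; [:: 6; 11; 13];
      [:: 6; 12; 16]; [:: 7; 12; 17]; [:: 13; 16; 17]].

Definition set_of_seq (s : seq nat) : {set 'I_19} := [set x : 'I_19 | val x \in s].

Lemma card_set_of_seq s : uniq s -> all (fun i => i < 19) s -> #|set_of_seq s| = size s.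
Proof.
move=> s_uniq s_lt; rewrite cardE -(size_map val); apply: perm_size.
apply: uniq_perm => [||i]; first by rewrite (map_inj_uniq val_inj) enum_uniq.
  by [].
apply/mapP/idP => [[x] | i_s]; first by rewrite mem_enum inE => + ->.
have i_lt : i < 19 by move/allP: s_lt; apply.
by exists (Ordinal i_lt); rewrite // mem_enum inE.
Qed.

Lemma K19_blocks_sizes :
  all (fun s => [&& uniq s, all (fun i => i < 19) s & (size s == 3) || (size s == 4)])
    K19_blocks.
Proof. by vm_compute. Qed.

Lemma K19_blocks_pairs :
  all (fun x => all (fun y =>
    (x == y) || (count (fun s => (x \in s) && (y \in s)) K19_blocks == 1)) (iota 0 19))
    (iota 0 19).
Proof. by vm_compute. Qed.

Lemma K34_decomposition_K19_blocks : K34_decomposition (map set_of_seq K19_blocks).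
Proof.
split=> [b /mapP[s s_in ->] | x y xy].
  by have /and3P[? ? ?] := allP K19_blocks_sizes s s_in; rewrite card_set_of_seq.
rewrite count_map -(eq_count (a1 := fun s => (val x \in s) && (val y \in s))) => [|s];
  last by rewrite /= !inE.
have iota19 (i : 'I_19) : val i \in iota 0 19 by rewrite mem_iota ltn_ord.
have /allP/(_ _ (iota19 y)) := allP K19_blocks_pairs _ (iota19 x).
by rewrite val_eqE (negbTE xy) => /eqP.
Qed.

Theorem mainTheorem2 :
  D34_is 19 35 /\
  (forall B : seq {set 'I_19}, K34_decomposition B -> size B = 35 ->
     num_K3 B = 13 /\ num_K4 B = 22).
Proof.
split; first split.
- by exists (map set_of_seq K19_blocks); split; [exact: K34_decomposition_K19_blocks|].
- by move=> B [block_size pair_once]; apply: size_ge35 => //; rewrite card_ord.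
move=> B [block_size pair_once] sizeB.
have edges : 2 * num_K4 B + num_K3 B = 57 := edge_count_K19 pair_once block_size (card_ord 19).
have : size B = num_K3 B + num_K4 B := size_blocks block_size.
by rewrite sizeB; lia.
Qed.
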